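(* Let $p_c,q_c\in\mathbb{R}_{\ge 0}$, let $M=\begin{bmatrix} p_c & q_c\\ -q_c & p_c\end{bmatrix}$, and let $v_{\min}\in\mathbb{R}_{>0}$. Consider the constant power load (CPL) operator $y_{cp}$ mapping a voltage $v=[v_d,v_q]^\top$ to the current $i=y_{cp}(v)=\dfrac{1}{\|v\|_2^2}Mv$, defined on inputs satisfying $\|v\|_2\ge v_{\min}$. Then $\operatorname{SRG}(y_{cp})\subseteq \operatorname{SRG}(\widehat{y_{cp}})$, where $$\operatorname{SRG}(\widehat{y_{cp}})=\Big\{re^{\mathrm{j}\alpha}\;\Big|\;\alpha\in[-\pi,\pi],\ 0\le r\le \frac{\sigma_{\max}(M)}{v_{\min}^2}\Big\},$$ i.e. the closed disk in $\mathbb{C}$ centred at the origin of radius $\sigma_{\max}(M)/v_{\min}^2$.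
   Context: $\sigma_{\max}(M)$ denotes the largest singular value of $M$, and $\|\cdot\|_2$ the 2-norm (the paper calls it the $\mathcal{L}_2$-norm). For a Hilbert space with inner product $\langle\cdot,\cdot\rangle$, the angle between nonzero vectors is $\angle(z_1,z_2)=\arccos\big(\Re\langle z_1,z_2\rangle/(\|z_1\|_2\|z_2\|_2)\big)$. The scaled relative graph of an operator $A$ is the subset of $\mathbb{C}$ $$\operatorname{SRG}(A)=\Big\{\frac{\|y_2-y_1\|_2}{\|u_2-u_1\|_2}\exp\big[\pm\mathrm{j}\,\angle(u_2-u_1,\,y_2-y_1)\big]\Big\},$$ ranging over all pairs of distinct inputs $u_1,u_2$ in the domain of $A$ with $y_k=A(u_k)$ (and $y_2\neq y_1$). *)

From mathcomp Require Import all_boot all_order all_algebra.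
From mathcomp Require Import all_classical all_reals all_analysis.
Set Implicit Arguments. Unset Strict Implicit. Unset Printing Implicit Defensive.
Import Order.TTheory GRing.Theory Num.Theory.
From mathcomp Require Export complex.
Local Open Scope ring_scope.
Local Open Scope classical_set_scope.
Local Open Scope complex_scope.

Definition inner (R : realType) (n : nat) (u v : 'cV[R]_n) : R := (u^T *m v) 0 0.

Definition norm2 (R : realType) (n : nat) (u : 'cV[R]_n) : R := Num.sqrt (inner u u).

Definition angle (R : realType) (n : nat) (u v : 'cV[R]_n) : R :=
  acos (inner u v / (norm2 u * norm2 v)).

Definition expj (R : realType) (t : R) : R[i] := (cos t +i* sin t)%C.

Definition SRG (R : realType) (n : nat) (D : set 'cV[R]_n) (A : 'cV[R]_n -> 'cV[R]_n)
  : set R[i] :=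
  [set z | exists u1 u2, [/\ D u1, D u2, u1 != u2, A u2 != A u1 &
     let g := norm2 (A u2 - A u1) / norm2 (u2 - u1) in
     let th := angle (u2 - u1) (A u2 - A u1) in
     z = g%:C * expj th \/ z = g%:C * expj (- th)]].

Definition sigma_max (R : realType) (m n : nat) (M : 'M[R]_(m, n)) : R :=
  Num.sqrt (sup [set l : R | eigenvalue (M^T *m M) l]).

Definition Mcpl (R : realType) (pc qc : R) : 'M[R]_2 :=
  \matrix_(i < 2, j < 2)
    (if i == j then pc else if (i == 0 :> 'I_2) then qc else - qc).

Definition ycp (R : realType) (pc qc : R) (v : 'cV[R]_2) : 'cV[R]_2 :=
  (norm2 v ^+ 2)^-1 *: (Mcpl pc qc *m v).

Definition ycp_dom (R : realType) (vmin : R) : set 'cV[R]_2 :=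
  [set v | vmin <= norm2 v].

Definition SRG_hat (R : realType) (pc qc vmin : R) : set R[i] :=
  [set z | exists r alpha : R,
     [/\ - pi <= alpha <= pi, 0 <= r <= sigma_max (Mcpl pc qc) / vmin ^+ 2 &
         z = r%:C * expj alpha]].

(* y_cp is the matrix M composed with the inversion v |-> v / |v|^2 in the unit
   sphere.  Since M^T M = (p_c^2 + q_c^2) I, M stretches every vector by
   sigma_max(M), and the inversion satisfies
   |v / |v|^2 - u / |u|^2| = |v - u| / (|u| |v|); hence y_cp is
   sigma_max(M) / v_min^2-Lipschitz on |v| >= v_min.  The SRG of an
   L-Lipschitz operator lies in the closed disk of radius L: its points have
   modulus |y2 - y1| / |u2 - u1| <= L and argument +-angle, with the angle
   in [0, pi] by Cauchy-Schwarz. *)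

From mathcomp Require Import all_boot all_order all_algebra.
From mathcomp Require Import all_classical all_reals all_analysis.
Import Order.TTheory GRing.Theory Num.Theory.
From mathcomp Require Import complex ring lra.
Set Implicit Arguments. Unset Strict Implicit. Unset Printing Implicit Defensive.
Local Open Scope ring_scope.
Local Open Scope classical_set_scope.
Local Open Scope complex_scope.

Section EuclideanSpace.
Variables (R : realType) (n : nat).
Implicit Types (u v w : 'cV[R]_n) (a b : R).

Lemma innerE u v : inner u v = \sum_i u i 0 * v i 0.
Proof. by rewrite /inner mxE; apply: eq_bigr => i _; rewrite mxE. Qed.

Lemma innerC u v : inner u v = inner v u.
Proof. by rewrite !innerE; apply: eq_bigr => i _; rewrite mulrC. Qed.

Lemma innerDl u v w : inner (u + v) w = inner u w + inner v w.
Proof. by rewrite !innerE -big_split; apply: eq_bigr => i _; rewrite mxE mulrDl. Qed.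

Lemma innerZl a u v : inner (a *: u) v = a * inner u v.
Proof. by rewrite !innerE mulr_sumr; apply: eq_bigr => i _; rewrite mxE mulrA. Qed.

Lemma innerDr u v w : inner u (v + w) = inner u v + inner u w.
Proof. by rewrite innerC innerDl !(innerC u). Qed.

Lemma innerZr a u v : inner u (a *: v) = a * inner u v.
Proof. by rewrite innerC innerZl innerC. Qed.

Lemma inner0l v : inner 0 v = 0.
Proof. by rewrite innerE big1 // => i _; rewrite mxE mul0r. Qed.

Lemma inner0r u : inner u 0 = 0.
Proof. by rewrite innerC inner0l. Qed.

Lemma inner_ge0 u : 0 <= inner u u.
Proof. by rewrite innerE; apply: sumr_ge0 => i _; rewrite -expr2 sqr_ge0. Qed.

Lemma inner_eq0 u : (inner u u == 0) = (u == 0).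
Proof.
apply/idP/eqP => [|->]; last by rewrite inner0l.
rewrite innerE psumr_eq0 => [/allP u0|i _]; last by rewrite -expr2 sqr_ge0.
apply/matrixP => i j; rewrite (ord1 j) mxE.
by have := u0 i (mem_index_enum _); rewrite mulf_eq0 orbb => /eqP.
Qed.

Lemma sqr_norm2 u : norm2 u ^+ 2 = inner u u.
Proof. by rewrite sqr_sqrtr // inner_ge0. Qed.

Lemma norm2_ge0 u : 0 <= norm2 u.
Proof. exact: sqrtr_ge0. Qed.

Lemma norm2_eq0 u : (norm2 u == 0) = (u == 0).
Proof. by rewrite -sqrf_eq0 sqr_norm2 inner_eq0. Qed.

Lemma norm2_gt0 u : (0 < norm2 u) = (u != 0).
Proof. by rewrite lt0r norm2_eq0 norm2_ge0 andbT. Qed.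

Lemma inner_sqrBZ a b u v :
  inner (a *: v - b *: u) (a *: v - b *: u) =
  a ^+ 2 * inner v v - 2 * a * b * inner u v + b ^+ 2 * inner u u.
Proof.
rewrite -scaleNr !(innerDl, innerDr, innerZl, innerZr) (innerC v u); ring.
Qed.

Lemma inner_le_norm2 u v : inner u v <= norm2 u * norm2 v.
Proof.
have [->|u0] := eqVneq u 0; first by rewrite inner0l mulr_ge0 ?norm2_ge0.
have [->|v0] := eqVneq v 0; first by rewrite inner0r mulr_ge0 ?norm2_ge0.
have := inner_ge0 (norm2 u *: v - norm2 v *: u).
rewrite inner_sqrBZ -!sqr_norm2.
have uv0 : 0 < norm2 u * norm2 v by rewrite mulr_gt0 ?norm2_gt0.
nra.
Qed.

Lemma CauchySchwarz_inner u v : `|inner u v| <= norm2 u * norm2 v.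
Proof.
rewrite ler_norml inner_le_norm2 andbT lerNl.
have := inner_le_norm2 (- u) v.
by rewrite -scaleN1r innerZl /norm2 innerZl innerZr !mulN1r opprK.
Qed.

(* Outside [-1, 1], [acos] returns an unspecified value. *)
Lemma angle_ge0_lepi u v : u != 0 -> v != 0 -> 0 <= angle u v <= pi.
Proof.
move=> u0 v0; have uv0 : 0 < norm2 u * norm2 v by rewrite mulr_gt0 ?norm2_gt0.
have bound : -1 <= inner u v / (norm2 u * norm2 v) <= 1.
  rewrite -ler_norml normrM normfV [`|_ * _|]gtr0_norm //.
  by rewrite ler_pdivrMr // mul1r CauchySchwarz_inner.
by rewrite /angle acos_ge0 ?acos_lepi.
Qed.

Definition sphere_inversion v := (norm2 v ^+ 2)^-1 *: v.

Lemma norm2_sphere_inversionB u v : u != 0 -> v != 0 ->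
  norm2 (sphere_inversion v - sphere_inversion u) =
  norm2 (v - u) / (norm2 u * norm2 v).
Proof.
rewrite -!norm2_gt0 => u0 v0.
apply/eqP; rewrite -(@eqrXn2 _ 2) ?divr_ge0 ?mulr_ge0 ?norm2_ge0 //.
have -> : v - u = 1 *: v - 1 *: u by rewrite !scale1r.
rewrite expr_div_n !sqr_norm2 !inner_sqrBZ -!sqr_norm2; apply/eqP; field.
by rewrite !gt_eqF.
Qed.

Lemma norm2_conformal_mulmx m (M : 'M[R]_(m, n)) (s : R) u :
  0 <= s -> M^T *m M = s%:M -> norm2 (M *m u) = Num.sqrt s * norm2 u.
Proof.
move=> s0 MtM; rewrite /norm2 -sqrtrM // /inner trmx_mul -mulmxA (mulmxA M^T) MtM.
by rewrite mul_scalar_mx -scalemxAr mxE.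
Qed.

End EuclideanSpace.

Lemma eigenvalue_scalar (F : fieldType) n (s l : F) :
  eigenvalue (s%:M : 'M[F]_n.+1) l = (l == s).
Proof.
apply/eigenvalueP/eqP => [[x] | ->]; last first.
  exists (const_mx 1); first by rewrite mul_mx_scalar.
  by apply/eqP => /matrixP/(_ 0 0)/eqP; rewrite !mxE oner_eq0.
rewrite mul_mx_scalar => /eqP; rewrite -subr_eq0 -scalerBl scaler_eq0 subr_eq0.
by case/orP => [/eqP|/eqP ->]; last by rewrite eqxx.
Qed.

Lemma sigma_max_scalar (R : realType) m n (M : 'M[R]_(m, n.+1)) s :
  M^T *m M = s%:M -> sigma_max M = Num.sqrt s.
Proof.
move=> MtM; rewrite /sigma_max MtM.
have -> : [set l : R | eigenvalue (s%:M : 'M[R]_n.+1) l] = [set s].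
  by apply/seteqP; split => l /=; rewrite eigenvalue_scalar => /eqP.
by rewrite sup1.
Qed.

Definition polar_disk {R : realType} (rho : R) : set R[i] :=
  [set z | exists r alpha : R,
     [/\ - pi <= alpha <= pi, 0 <= r <= rho & z = r%:C * expj alpha]].

Lemma SRG_sub_polar_disk (R : realType) n (D : set 'cV[R]_n)
    (A : 'cV[R]_n -> 'cV[R]_n) (L : R) :
  (forall u1 u2, D u1 -> D u2 -> norm2 (A u2 - A u1) <= L * norm2 (u2 - u1)) ->
  SRG D A `<=` polar_disk L.
Proof.
move=> lipA z [u1 [u2 [D1 D2 u12 A12]]] /=.
set g := _ / _; set th := angle _ _.
have du : u2 - u1 != 0 by rewrite subr_eq0 eq_sym.
have dA : A u2 - A u1 != 0 by rewrite subr_eq0.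
have /andP[th0 thpi] : 0 <= th <= pi := angle_ge0_lepi du dA.
have g0 : 0 <= g by rewrite divr_ge0 ?norm2_ge0.
have gL : g <= L by rewrite ler_pdivrMr ?norm2_gt0 ?lipA.
have pi0 := @pi_ge0 R.
by case=> ->; [exists g, th | exists g, (- th)];
  split; rewrite ?g0 ?gL //; apply/andP; split; lra.
Qed.

Section ConstantPowerLoad.
Variables (R : realType) (pc qc : R).

Lemma Mcpl_conformal :
  (Mcpl pc qc)^T *m Mcpl pc qc = (pc ^+ 2 + qc ^+ 2)%:M.
Proof.
apply/matrixP => i j; rewrite !mxE !big_ord_recl big_ord0 !mxE.
by case: i j => [[|[|?]] ?] [[|[|?]] ?] //=; ring.
Qed.

Lemma ycp_sphere_inversion (v : 'cV[R]_2) :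
  ycp pc qc v = Mcpl pc qc *m sphere_inversion v.
Proof. by rewrite /ycp /sphere_inversion scalemxAr. Qed.

Lemma ycp_lipschitz (vmin : R) (u v : 'cV[R]_2) :
  0 < vmin -> vmin <= norm2 u -> vmin <= norm2 v ->
  norm2 (ycp pc qc v - ycp pc qc u) <=
    sigma_max (Mcpl pc qc) / vmin ^+ 2 * norm2 (v - u).
Proof.
move=> vmin0 hu hv.
have u0 : 0 < norm2 u := lt_le_trans vmin0 hu.
have v0 : 0 < norm2 v := lt_le_trans vmin0 hv.
rewrite !ycp_sphere_inversion -mulmxBr (sigma_max_scalar Mcpl_conformal).
rewrite (norm2_conformal_mulmx _ _ Mcpl_conformal) ?addr_ge0 ?sqr_ge0 //.
rewrite norm2_sphere_inversionB -?norm2_gt0 // -mulrA.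
apply: ler_wpM2l; first exact: sqrtr_ge0.
rewrite mulrC; apply: ler_wpM2r; first exact: norm2_ge0.
rewrite lef_pV2 ?posrE ?mulr_gt0 ?exprn_gt0 // expr2.
by apply: ler_pM => //; apply: ltW.
Qed.

End ConstantPowerLoad.

Theorem lemma1 (R : realType) (pc qc vmin : R)
  (hp : 0 <= pc) (hq : 0 <= qc) (hv : 0 < vmin) :
  SRG (ycp_dom vmin) (ycp pc qc) `<=` SRG_hat pc qc vmin.
Proof.
apply: SRG_sub_polar_disk => u1 u2 hu1 hu2.
exact: ycp_lipschitz.
Qed.
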